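(* Let $G=(V,E)$ be a connected undirected graph and $\bm q$ a probability distribution on $V$. Then $G$ is an $\alpha$-insensitive equilibrium in the add-delete-model (with jump distribution $\bm q$) if and only if $G$ is a complete graph.
   Context: PageRank. For $\alpha\in(0,1)$ and distribution $\bm q$, for a directed graph $D$ let $\Gamma(u)$ be the out-neighbour set; the potential $\phi_{uv}$ is the probability that an $\alpha$-random walk (with probability $\alpha$ jump to a vertex drawn from $\bm q$, otherwise move to a uniformly random out-neighbour; a vertex with no out-neighbours forces a jump) started at $u$ visits $v$ before its first jump; for $\Gamma(v)\ne\emptyset$ the PageRank is $\pi_v=\alpha\,\frac{\sum_{u}q_u\phi_{uv}}{1-\frac{1-\alpha}{|\Gamma(v)|}\sum_{i\in\Gamma(v)}\phi_{iv}}$ (the stationary probability of $v$ when no out-degree is $0$). Undirected graphs are identified with bidirected graphs; $\pi^H_w$ is the PageRank of $w$ in $H$. Add-delete-model. A strategy of a vertex $v$ of $G$ is a subset $E_v\subseteq\Gamma(v)$ of neighbours to keep together with at most one non-neighbour $u\ne v$; the resulting graph $G'$ is obtained by deleting edges $vw$, $w\in\Gamma(v)\setminus E_v$, and adding $uv$ if $u$ is chosen ($v$ must keep at least one neighbour in $G'$). It is admissible if no edge is added, or the edge $uv$ is added and $\pi^{G'}_u>\pi^G_u$. $v$ is in best response if no admissible strategy gives $\pi^{G'}_v>\pi^G_v$; $G$ is a Nash equilibrium (for given $\alpha,\bm q$) if every vertex is in best response. $G$ is an $\alpha$-insensitive equilibrium if it is a Nash equilibrium in the add-delete-model for every $\alpha\in(0,1)$.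 *)

From HB Require Import structures.
From mathcomp Require Import all_boot all_order all_algebra.
Set Implicit Arguments. Unset Strict Implicit. Unset Printing Implicit Defensive.
Import Order.TTheory GRing.Theory Num.Theory.
Local Open Scope ring_scope.

(* Vertices are 'I_n.  A (directed) graph is a relation D : rel 'I_n,
   D u w meaning that w is an out-neighbour of u.  Undirected graphs are
   symmetric irreflexive relations (= bidirected graphs). *)

Definition outdeg n (D : rel 'I_n) (u : 'I_n) : nat := #|[set w | D u w]|.

Section PageRank.
Variable R : numFieldType.

(* Sub-stochastic "walk until v" matrix: from u <> v move to a uniformly
   random out-neighbour with probability (1 - alpha); rows of v and of
   vertices without out-neighbours are 0 (the walk stops / jumps). *)
Definition walk_mx n (D : rel 'I_n) (alpha : R) (v : 'I_n) : 'M[R]_n :=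
  \matrix_(i, j) (if i == v then 0
                  else if D i j then (1 - alpha) / (outdeg D i)%:R else 0).

(* Potential phi_{uv}: probability that the alpha-random walk started at u
   visits v before its first jump.  By first-step analysis it is the unique
   solution x of  x_v = 1,  x_u = (1-alpha)/|Gamma(u)| sum_{w in Gamma(u)} x_w
   (u <> v), i.e. x = (I - walk_mx v)^{-1} e_v
   (= sum_k walk_mx^k e_v = sum over walks u ~> v avoiding v before the end). *)
Definition potential n (D : rel 'I_n) (alpha : R) (u v : 'I_n) : R :=
  (invmx (1%:M - walk_mx D alpha v) *m (\col_j (j == v)%:R)) u ord0.

(* PageRank of v (formula of the paper, meaningful when Gamma(v) <> empty). *)
Definition pagerank n (D : rel 'I_n) (alpha : R) (q : 'I_n -> R) (v : 'I_n) : R :=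
  alpha * (\sum_u q u * potential D alpha u v)
  / (1 - (1 - alpha) / (outdeg D v)%:R
         * \sum_(i | D v i) potential D alpha i v).

(* Graph obtained when v keeps exactly the neighbours in Ev (deleting the
   edges vw, w in Gamma(v) \ Ev) and possibly adds the edge uv (u = Some u0). *)
Definition strategy_graph n (G : rel 'I_n) (v : 'I_n) (Ev : {set 'I_n})
    (u : option 'I_n) : rel 'I_n :=
  fun x y =>
    (G x y && ~~ (((x == v) && (y \notin Ev)) || ((y == v) && (x \notin Ev))))
    || (if u is Some u0 then ((x == v) && (y == u0)) || ((x == u0) && (y == v))
        else false).

Definition is_strategy n (G : rel 'I_n) (v : 'I_n) (Ev : {set 'I_n})
    (u : option 'I_n) : Prop :=
  (forall w, w \in Ev -> G v w) /\
  (if u is Some u0 then u0 != v /\ ~~ G v u0 else True) /\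
  (exists w, strategy_graph G v Ev u v w).

Definition admissible n (G : rel 'I_n) (alpha : R) (q : 'I_n -> R)
    (v : 'I_n) (Ev : {set 'I_n}) (u : option 'I_n) : Prop :=
  if u is Some u0 then
    pagerank G alpha q u0 < pagerank (strategy_graph G v Ev u) alpha q u0
  else True.

Definition best_response n (G : rel 'I_n) (alpha : R) (q : 'I_n -> R)
    (v : 'I_n) : Prop :=
  forall Ev u, is_strategy G v Ev u -> admissible G alpha q v Ev u ->
    ~ (pagerank G alpha q v < pagerank (strategy_graph G v Ev u) alpha q v).

Definition nash_equilibrium n (G : rel 'I_n) (alpha : R) (q : 'I_n -> R) : Prop :=
  forall v, best_response G alpha q v.

Definition alpha_insensitive_equilibrium n (G : rel 'I_n) (q : 'I_n -> R) : Prop :=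
  forall alpha : R, 0 < alpha -> alpha < 1 -> nash_equilibrium G alpha q.

End PageRank.

Definition undirected_graph n (G : rel 'I_n) : Prop :=
  (forall x y, G x y = G y x) /\ (forall x, ~~ G x x).

Definition connected_graph n (G : rel 'I_n) : Prop :=
  forall x y, connect G x y.

Definition complete_graph n (G : rel 'I_n) : Prop :=
  forall x y, x != y -> G x y.

Definition prob_distribution (R : numDomainType) n (q : 'I_n -> R) : Prop :=
  (forall i, 0 <= q i) /\ \sum_i q i = 1.

(* Write [pi_v = a N / (1 - (1 - a) P)] with [N = sum_u q_u phi_uv] and [P] the mean
   potential over the neighbours of [v].  The potential [phi_.v] obeys a maximum
   principle, so it is squeezed between the sub- and supersolutions [1 - a h] and
   [1 - a h / (1 + a H)], where [h] is the hitting time of [v] and [H >= h]; with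
   Kac's formula this gives [pi_v = deg v / sum_u deg u + O(a)].
   If [x] and [y] are not adjacent, adding [xy] raises [deg x / sum deg] to
   [(deg x + 1) / (sum deg + 2)] because [2 deg x < sum deg], and likewise for [y]; so
   for small [a] the new edge is admissible and profitable for [x].
   Conversely, in a complete graph a vertex can only delete edges.  Deleting edges
   into [v] lowers every potential [phi_.v] (maximum principle again), while all
   neighbours of [v] had the same potential, so neither [N] nor [P] can grow. *)

From HB Require Import structures.
From mathcomp Require Import all_boot all_order all_algebra.
From mathcomp Require Import ring lra.
Set Implicit Arguments. Unset Strict Implicit. Unset Printing Implicit Defensive.
Import Order.TTheory GRing.Theory Num.Theory.
Local Open Scope ring_scope.

Section OutAverage.
Variables (R : realFieldType) (n : nat) (D : rel 'I_n).

Definition avg_out (f : 'I_n -> R) (u : 'I_n) : R :=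
  (\sum_(w | D u w) f w) / (outdeg D u)%:R.

Lemma sumr_out_const u (c : R) : \sum_(w | D u w) c = c * (outdeg D u)%:R.
Proof. by rewrite sumr_const /outdeg cardsE mulr_natr. Qed.

Lemma outdeg_eq0 u : outdeg D u = 0%N -> forall w, ~~ D u w.
Proof. by move/eqP; rewrite cards_eq0 => /eqP e w; rewrite -[D u w](in_set (D u)) e inE. Qed.

Lemma avg_out_mul_outdeg f u :
  avg_out f u * (outdeg D u)%:R = \sum_(w | D u w) f w.
Proof.
have [d0|d0] := eqVneq (outdeg D u) 0%N; last by rewrite divfK // pnatr_eq0.
by rewrite d0 mulr0 big_pred0 // => w; apply/negbTE/outdeg_eq0.
Qed.

Lemma outdeg_gt0 u w : D u w -> (0 < outdeg D u)%N.
Proof. by move=> Duw; apply/card_gt0P; exists w; rewrite inE. Qed.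

Lemma avg_outB f g u : avg_out (f \- g) u = avg_out f u - avg_out g u.
Proof. by rewrite /avg_out sumrB mulrBl. Qed.

Lemma avg_outN f u : avg_out (fun w => - f w) u = - avg_out f u.
Proof. by rewrite /avg_out sumrN mulNr. Qed.

Lemma avg_outZ c f u : avg_out (fun w => c * f w) u = c * avg_out f u.
Proof. by rewrite /avg_out -mulr_sumr mulrA. Qed.

Lemma avg_out_const_on c f u :
  (0 < outdeg D u)%N -> (forall w, D u w -> f w = c) -> avg_out f u = c.
Proof.
move=> d0 fc; rewrite /avg_out (eq_bigr _ fc) sumr_out_const mulfK //.
by rewrite pnatr_eq0 -lt0n.
Qed.

Lemma avg_out_cst c u : (0 < outdeg D u)%N -> avg_out (fun=> c) u = c.
Proof. by move=> d0; apply: avg_out_const_on. Qed.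

Lemma ler_avg_out f g u : (forall w, f w <= g w) -> avg_out f u <= avg_out g u.
Proof. by move=> fg; rewrite ler_wpM2r ?invr_ge0 // ler_sum. Qed.

Lemma avg_out_ge0 f u : (forall w, 0 <= f w) -> 0 <= avg_out f u.
Proof. by move=> f0; rewrite divr_ge0 // sumr_ge0. Qed.

Lemma avg_out_le f u M :
  0 <= M -> (forall w, D u w -> f w <= M) -> avg_out f u <= M.
Proof.
move=> M0 fM; have [d0|d0] := eqVneq (outdeg D u) 0%N.
  by rewrite /avg_out d0 invr0 mulr0.
rewrite ler_pdivrMr ?ltr0n ?lt0n // -sumr_out_const.
by apply: ler_sum => w /fM.
Qed.

Lemma avg_out_eq_max f u M :
  (0 < outdeg D u)%N -> (forall w, D u w -> f w <= M) -> M <= avg_out f u ->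
  forall w, D u w -> f w = M.
Proof.
move=> d0 fM Mf.
have gap0 : \sum_(w | D u w) (M - f w) = 0.
  apply/eqP; rewrite sumrB sumr_out_const subr_eq0 eq_le -ler_pdivlMr ?ltr0n //.
  by rewrite Mf -sumr_out_const ler_sum.
move=> w Duw; apply/eqP; rewrite eq_sym -subr_eq0.
by rewrite (psumr_eq0P _ gap0) // => z /fM; rewrite subr_ge0.
Qed.

End OutAverage.

Lemma avg_out_drop_max (R : realFieldType) n (D D' : rel 'I_n) (f : 'I_n -> R) u v :
  (forall w, w != v -> D' u w = D u w) -> (D' u v -> D u v) ->
  (forall w, 0 <= f w) -> (forall w, f w <= f v) ->
  avg_out D' f u <= avg_out D f u.
Proof.
move=> DD' D'v f0 fv.
have [D'uv|] := eqVneq (D' u v) (D u v).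
  have eqD w : D' u w = D u w by case: (eqVneq w v) => [->|/DD'].
  by rewrite /avg_out /outdeg (eq_bigl _ _ eqD) (eq_finset _ eqD).
move=> D'uv; have nD'uv : D' u v = false by apply: contraNF D'uv => uv; rewrite uv D'v.
have Duv : D u v by move: D'uv; rewrite nD'uv eq_sym eqbF_neg negbK.
have sumE (g : 'I_n -> R) : \sum_(w | D u w) g w = g v + \sum_(w | D' u w) g w.
  rewrite (bigD1 v) //=; congr (_ + _); apply: eq_bigl => w.
  by case: (eqVneq w v) => [->|wv]; rewrite ?eqxx ?andbF ?nD'uv // andbT DD'.
have degE : (outdeg D u)%:R = 1 + (outdeg D' u)%:R :> R.
  by rewrite -[LHS]mul1r -sumr_out_const sumE sumr_out_const mul1r.
have S_le : \sum_(w | D' u w) f w <= f v * (outdeg D' u)%:R.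
  by rewrite -sumr_out_const ler_sum.
have [d0|d0] := eqVneq (outdeg D' u) 0%N.
  by rewrite {1}/avg_out d0 invr0 mulr0 avg_out_ge0.
rewrite /avg_out sumE degE ler_pdivrMr ?ltr0n ?lt0n // mulrAC ler_pdivlMr; last by
  apply: ltr_pwDl; rewrite ?ltr0n ?lt0n.
nra.
Qed.

Section MaxPrinciple.
Variables (R : realFieldType) (n : nat) (D : rel 'I_n) (v : 'I_n).

Definition max_principle (b : R) : Prop :=
  forall x : 'I_n -> R, x v <= 0 ->
    (forall u, u != v -> x u <= b * avg_out D x u) -> forall u, x u <= 0.

Lemma argmax_exists (x : 'I_n -> R) : exists i, forall j, x j <= x i.
Proof. by case: (@arg_maxP _ R _ v predT x isT) => i _ xi; exists i => j; apply: xi. Qed.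

Lemma max_principle_contract b : 0 <= b -> b < 1 -> max_principle b.
Proof.
move=> b0 b1 x xv xu u; have [i xi] := argmax_exists x.
apply: le_trans (xi u) _; rewrite leNgt; apply/negP => xi0.
have iv : i != v by apply: contraTneq xi0 => ->; rewrite -leNgt.
have : avg_out D x i <= x i by apply: avg_out_le => [|w _]; [exact: ltW | exact: xi].
have := xu i iv; nra.
Qed.

Lemma max_principle_connected : (forall u, connect D u v) -> max_principle 1.
Proof.
move=> conn x xv xu u; have [i xi] := argmax_exists x.
apply: le_trans (xi u) _; rewrite leNgt; apply/negP => xi0.
have xv_lt : x v < x i by apply: le_lt_trans xi0.
suff max_along p w : path D w p -> x w = x i -> x (last w p) = x i.
  case/connectP: (conn i) => p /max_along /(_ erefl) xp vp.
  by move: xv_lt; rewrite vp xp ltxx.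
elim: p w => [|z p IHp] w //= /andP [Dwz pz] xw; apply: IHp => //.
have wv : w != v by apply: contraTneq xv_lt => <-; rewrite xw ltxx.
apply: (avg_out_eq_max (outdeg_gt0 Dwz) (fun y _ => xi y)) Dwz.
by rewrite -xw -[avg_out _ _ _]mul1r xu.
Qed.

Lemma max_principle_le b (x y : 'I_n -> R) : max_principle b -> x v <= y v ->
    (forall u, u != v -> x u - b * avg_out D x u <= y u - b * avg_out D y u) ->
  forall u, x u <= y u.
Proof.
move=> mp xyv xyu u; rewrite -subr_le0; apply: (mp (x \- y)) => [|w wv].
  by rewrite subr_le0.
by rewrite /= avg_outB mulrBr; have := xyu w wv; lra.
Qed.

End MaxPrinciple.

Section WalkMatrix.
Variables (R : realFieldType) (n : nat) (D : rel 'I_n) (a : R) (v : 'I_n).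

Definition walk_solve (c : 'I_n -> R) (u : 'I_n) : R :=
  (invmx (1%:M - walk_mx D a v) *m \col_j c j) u ord0.

Lemma walk_mulmxE (X : 'cV[R]_n) u :
  ((1%:M - walk_mx D a v) *m X) u ord0 =
  X u ord0 - (if u == v then 0 else (1 - a) * avg_out D (fun j => X j ord0) u).
Proof.
rewrite mulmxBl mul1mx !mxE; congr (_ - _); under eq_bigr do rewrite mxE.
case: eqP => _; first by rewrite big1 // => j _; rewrite mul0r.
rewrite /avg_out mulr_suml mulr_sumr [RHS]big_mkcond; apply: eq_bigr => j _ /=.
by case: (D u j); rewrite ?mul0r ?mulr0 // mulrAC -mulrA.
Qed.

Hypothesis mp : max_principle D v (1 - a).

Lemma walk_unitmx : 1%:M - walk_mx D a v \in unitmx.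
Proof.
rewrite -unitmx_tr -row_free_unit; apply: inj_row_free => r rA0.
apply: trmx_inj; rewrite trmx0; set X := r^T.
have AX0 : (1%:M - walk_mx D a v) *m X = 0 by rewrite -[1%:M - _]trmxK -trmx_mul rA0 trmx0.
have Xeq u : X u ord0 = if u == v then 0 else (1 - a) * avg_out D (fun j => X j ord0) u.
  by apply/eqP; rewrite -subr_eq0 -walk_mulmxE AX0 mxE.
have Xv : X v ord0 = 0 by rewrite Xeq eqxx.
have Xu u : u != v -> X u ord0 = (1 - a) * avg_out D (fun j => X j ord0) u.
  by move=> /negbTE uv; rewrite Xeq uv.
have X_le0 : forall u, X u ord0 <= 0.
  by apply: mp; rewrite ?Xv // => u /Xu ->.
have X_ge0 : forall u, - X u ord0 <= 0.
  apply: (mp (x := fun j => - X j ord0)); first by rewrite Xv oppr0.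
  by move=> u /Xu ->; rewrite avg_outN mulrN.
apply/matrixP => i j; rewrite ord1 [RHS]mxE; apply/eqP; rewrite eq_le X_le0.
by rewrite -oppr_le0 X_ge0.
Qed.

Lemma walk_solution (c : 'I_n -> R) (x := walk_solve c) :
  x v = c v /\ forall u, u != v -> x u = c u + (1 - a) * avg_out D x u.
Proof.
have Ax u : x u - (if u == v then 0 else (1 - a) * avg_out D x u) = c u.
  by rewrite -walk_mulmxE mulKVmx ?walk_unitmx // mxE.
split; first by have := Ax v; rewrite eqxx subr0.
by move=> u /negbTE uv; have := Ax u; rewrite uv => <-; rewrite subrK.
Qed.

End WalkMatrix.

Section Potential.
Variables (R : realFieldType) (n : nat) (D : rel 'I_n) (a : R) (v : 'I_n).

Lemma max_principle_walk : 0 < a -> a < 1 -> max_principle D v (1 - a).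
Proof. by move=> a0 a1; apply: max_principle_contract; lra. Qed.

Lemma potential_eq : 0 < a -> a < 1 ->
  potential D a v v = 1 /\
  forall u, u != v -> potential D a u v = (1 - a) * avg_out D (potential D a ^~ v) u.
Proof.
move=> a0 a1; have mp := max_principle_walk a0 a1.
have [pv pu] := walk_solution mp (fun j => (j == v)%:R).
split=> [|u uv]; first by rewrite -[LHS]/(walk_solve _ _ _ _ _) pv eqxx.
by have := pu u uv; rewrite (negbTE uv) add0r.
Qed.

Lemma potential_ge0 : 0 < a -> a < 1 -> forall u, 0 <= potential D a u v.
Proof.
move=> a0 a1 u; have [pv pu] := potential_eq a0 a1; rewrite -oppr_le0.
apply: (max_principle_walk a0 a1 (x := fun j => - potential D a j v)) => [|w wv].
  by rewrite pv lerN10.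
by rewrite avg_outN mulrN pu.
Qed.

Lemma potential_le1 : 0 < a -> a < 1 -> forall u, potential D a u v <= 1.
Proof.
move=> a0 a1; have [pv pu] := potential_eq a0 a1.
apply: (max_principle_le (y := fun=> 1) (max_principle_walk a0 a1)) => [|u uv].
  by rewrite pv.
have : avg_out D (fun=> 1 : R) u <= 1 by apply: avg_out_le.
by rewrite pu // subrr; nra.
Qed.

End Potential.

Section HittingTime.
Variables (R : realFieldType) (n : nat) (D : rel 'I_n) (v : 'I_n).

Lemma hitting_time_exists : (forall u, connect D u v) ->
  exists h : 'I_n -> R, [/\ h v = 0,
    forall u, u != v -> h u = 1 + avg_out D h u & forall u, 0 <= h u].
Proof.
(* At [a = 0] the walk matrix is the simple random walk stopped at [v]. *)
move=> conn; have mp : max_principle D v (1 - 0 : R).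
  by rewrite subr0; exact: max_principle_connected.
have [hv hu] := walk_solution mp (fun j => (j != v)%:R).
set h := walk_solve _ _ _ _ in hv hu; exists h; rewrite eqxx in hv.
have hu' u : u != v -> h u = 1 + avg_out D h u by move=> uv; rewrite hu // uv subr0 mul1r.
split=> // u; rewrite -oppr_le0; apply: (mp (fun j => - h j)) => [|w wv].
  by rewrite hv oppr0.
by rewrite avg_outN subr0 mul1r hu' //; lra.
Qed.

(* Kac's formula: the mean return time to [v] is [\sum_u deg u / deg v]. *)
Lemma hitting_time_kac (h : 'I_n -> R) : (forall x y, D x y = D y x) ->
  h v = 0 -> (forall u, u != v -> h u = 1 + avg_out D h u) ->
  (1 + avg_out D h v) * (outdeg D v)%:R = \sum_u (outdeg D u)%:R.
Proof.
move=> sym hv hu; set deg := fun u => (outdeg D u)%:R : R.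
have double_count : \sum_u avg_out D h u * deg u = \sum_u h u * deg u.
  under eq_bigr do rewrite avg_out_mul_outdeg big_mkcond.
  rewrite exchange_big; apply: eq_bigr => w _.
  by rewrite -big_mkcond (eq_bigl (D w)) ?sumr_out_const // => u; rewrite sym.
have total : \sum_u (1 + avg_out D h u) * deg u = \sum_u deg u + \sum_u h u * deg u.
  by rewrite -double_count -big_split; apply: eq_bigr => u _; rewrite mulrDl mul1r.
rewrite (bigD1 v) //= [\sum_u h u * deg u](bigD1 v) //= hv mul0r add0r in total.
rewrite (eq_bigr (fun u => h u * deg u)) in total => [|u uv]; last by rewrite -hu.
exact: addIr total.
Qed.

End HittingTime.

Lemma dist_div_inv_le (R : realFieldType) (e N A K H : R) :
  1 <= e -> e <= 1 + A -> 1 + A - e <= K -> 0 <= H -> 1 - H <= N -> N <= 1 ->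
  `|N / e - (1 + A)^-1| <= K + H.
Proof.
move=> e1 eA eK H0 HN N1.
have e0 : 0 < e by lra.
have A1 : 0 < 1 + A by lra.
have inv_le : (1 + A)^-1 <= e^-1 by rewrite lef_pV2 ?posrE.
have inv_gap : e^-1 - (1 + A)^-1 <= 1 + A - e.
  have -> : e^-1 - (1 + A)^-1 = (1 + A - e) / (e * (1 + A)) by field; rewrite !gt_eqF.
  rewrite ler_pdivrMr ?mulr_gt0 //; rewrite -subr_ge0.
  have -> : (1 + A - e) * (e * (1 + A)) - (1 + A - e) =
            (1 + A - e) * (e * (1 + A) - 1) by ring.
  by rewrite mulr_ge0 // subr_ge0; nra.
have N_le : N / e <= e^-1 by rewrite ler_pdivrMr // mulVf ?gt_eqF.
have N_ge : e^-1 - H <= N / e.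
  have He : H / e <= H by rewrite ler_pdivrMr // ler_peMr.
  have : (1 - H) / e <= N / e by rewrite ler_pM2r ?invr_gt0.
  rewrite mulrBl mul1r; lra.
rewrite ler_distl; apply/andP; split; lra.
Qed.

Lemma pagerank_ratio_approx (R : realFieldType) (a N P A H : R) :
  0 < a -> a < 1 -> 0 <= A -> 0 <= H -> 1 - a * H <= N -> N <= 1 ->
  1 - a * A <= P -> P <= 1 - a / (1 + a * H) * A ->
  `|a * N / (1 - (1 - a) * P) - (1 + A)^-1| <= a * (A * (1 + H) + H).
Proof.
move=> a0 a1 A0 H0 N_ge N_le P_ge P_le.
set c := a / (1 + a * H); set e := (1 - (1 - a) * P) / a.
have {}P_le : P <= 1 - c * A by [].
have aH : 0 <= a * H by rewrite mulr_ge0 // ltW.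
have aH0 : 0 < 1 + a * H by lra.
have cH : c * (1 + a * H) = a by rewrite divfK // gt_eqF.
have c_le : c <= a by rewrite ler_pdivrMr //; nra.
have c0 : 0 <= c by rewrite divr_ge0 // ltW.
have cA0 : 0 <= c * A by rewrite mulr_ge0.
have eE : a * e = (1 - P) * (1 - a) + a by rewrite /e mulrCA divff ?gt_eqF // mulr1; ring.
have -> : a * N / (1 - (1 - a) * P) = N / e.
  by rewrite /e invf_div mulrCA mulrA.
have ge1 : 1 <= e.
  by rewrite -(ler_pM2l a0) mulr1 eE lerDr mulr_ge0 //; lra.
have leA : e <= 1 + A.
  rewrite -(ler_pM2l a0) eE; have : (1 - P) * (1 - a) <= 1 - P by rewrite ler_piMr; lra.
  lra.
have gapA : 1 + A - e <= a * (A * (1 + H)).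
  rewrite -(ler_pM2l a0) mulrBr eE.
  have : c * A * (1 - a) <= (1 - P) * (1 - a) by apply: ler_wpM2r; lra.
  have : c * A * a <= a * A * a by rewrite ler_wpM2r ?ler_wpM2r // ltW.
  nra.
by rewrite mulrDr; apply: dist_div_inv_le.
Qed.

Lemma pagerank_ratio_le (R : realFieldType) (a N N' P P' : R) :
  0 < a -> a < 1 -> 0 <= N' -> N' <= N -> P' <= P -> P <= 1 ->
  a * N' / (1 - (1 - a) * P') <= a * N / (1 - (1 - a) * P).
Proof.
move=> a0 a1 N'0 NN' PP' P1.
have d_ge : a <= 1 - (1 - a) * P by have := ler_wpM2l (_ : 0 <= 1 - a) P1; lra.
have d'_ge : 1 - (1 - a) * P <= 1 - (1 - a) * P'.
  by have := ler_wpM2l (_ : 0 <= 1 - a) PP'; lra.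
rewrite ler_pdivrMr; last lra.
rewrite mulrAC ler_pdivlMr; last lra.
by rewrite ler_pM // ?mulr_ge0 // ?ler_wpM2l //; lra.
Qed.

Lemma ratio_lt_succ (R : realFieldType) (d S : R) :
  0 <= d -> 2 * d < S -> d / S < (d + 1) / (S + 2).
Proof.
move=> d0 dS; have S0 : 0 < S by lra.
by rewrite ltr_pdivrMr // mulrAC ltr_pdivlMr; lra.
Qed.

Lemma lt_near0_of_approx (R : realFieldType) (f g : R -> R) (l l' : R) :
  l < l' ->
  (exists C, forall a, 0 < a -> a < 1 -> `|f a - l| <= a * C) ->
  (exists C, forall a, 0 < a -> a < 1 -> `|g a - l'| <= a * C) ->
  exists2 d, 0 < d <= 1 & forall a, 0 < a -> a < d -> f a < g a.
Proof.
move=> ll' [C fC] [C' gC']; set K := `|C| + `|C'| + 1.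
have K0 : 0 < K by rewrite /K ltr_pwDr // addr_ge0.
exists (Num.min 1 ((l' - l) / K)).
  by rewrite ge_min lexx lt_min ltr01 divr_gt0 // subr_gt0.
move=> a a0; rewrite lt_min => /andP [a1 aK].
have := fC a a0 a1; have := gC' a a0 a1; rewrite !ler_distl => /andP [g_ge _] /andP [_ f_le].
have := ler_wpM2l (ltW a0) (ler_norm C); have := ler_wpM2l (ltW a0) (ler_norm C').
have : a * K < l' - l by rewrite -ltr_pdivlMr.
rewrite /K; nra.
Qed.

Lemma pagerankE (R : realFieldType) n (D : rel 'I_n) (a : R) q v :
  pagerank D a q v =
  a * (\sum_u q u * potential D a u v) / (1 - (1 - a) * avg_out D (potential D a ^~ v) v).
Proof. by rewrite /pagerank /avg_out [in RHS]mulrA [in RHS](mulrAC (1 - a)). Qed.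

Section PotentialHittingTime.
Variables (R : realFieldType) (n : nat) (D : rel 'I_n) (v : 'I_n) (h : 'I_n -> R).
Variables (a H : R).
Hypotheses (deg_gt0 : forall u, (0 < outdeg D u)%N) (hv : h v = 0).
Hypotheses (hu : forall u, u != v -> h u = 1 + avg_out D h u) (h_ge0 : forall u, 0 <= h u).

Lemma avg_out_affine c u :
  avg_out D (fun w => 1 - c * h w) u = 1 - c * avg_out D h u.
Proof. by rewrite avg_outB avg_out_cst // avg_outZ. Qed.

Lemma potential_ge_hitting : 0 < a -> a < 1 ->
  forall u, 1 - a * h u <= potential D a u v.
Proof.
move=> a0 a1; have [pv pu] := potential_eq D v a0 a1.
apply: (max_principle_le (x := fun u => 1 - a * h u) (y := potential D a ^~ v)
  (max_principle_walk (D := D) (v := v) a0 a1)) => [|u uv].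
  by rewrite hv mulr0 subr0 pv.
rewrite avg_out_affine -pu // subrr hu //.
have := avg_out_ge0 D u h_ge0; nra.
Qed.

(* [1 - c h] is a supersolution as soon as [c (1 + a avg h) <= a]; [h <= H] makes
   [c = a / (1 + a H)] work. *)
Lemma potential_le_hitting : 0 < a -> a < 1 -> (forall u, h u <= H) ->
  forall u, potential D a u v <= 1 - a / (1 + a * H) * h u.
Proof.
move=> a0 a1 hH; have [pv pu] := potential_eq D v a0 a1.
have H0 : 0 <= H by apply: le_trans (hH v); rewrite hv.
have aH0 : 0 < 1 + a * H by rewrite ltr_pwDl // mulr_ge0 // ltW.
set c := a / (1 + a * H).
have c0 : 0 <= c by rewrite divr_ge0 // ltW.
have cH : c * (1 + a * H) = a by rewrite divfK // gt_eqF.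
apply: (max_principle_le (x := potential D a ^~ v) (y := fun u => 1 - c * h u)
  (max_principle_walk (D := D) (v := v) a0 a1)) => [|u uv].
  by rewrite hv mulr0 subr0 pv.
rewrite avg_out_affine -pu // subrr hu //.
have hA : avg_out D h u <= H by apply: avg_out_le => // w _; apply: hH.
have hA' : 0 <= H - avg_out D h u by lra.
have := mulr_ge0 (mulr_ge0 c0 (ltW a0)) hA'; nra.
Qed.

End PotentialHittingTime.

Lemma pagerank_approx_deg (R : realFieldType) n (D : rel 'I_n) (q : 'I_n -> R) v :
  (forall x y, D x y = D y x) -> (forall u, connect D u v) ->
  (forall u, (0 < outdeg D u)%N) -> prob_distribution q ->
  exists C, forall a, 0 < a -> a < 1 ->
    `|pagerank D a q v - (outdeg D v)%:R / \sum_u (outdeg D u)%:R| <= a * C.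
Proof.
move=> sym conn deg_gt0 [q0 q1].
have [h [hv hu h0]] := hitting_time_exists R conn.
set H := \sum_u h u; set A := avg_out D h v.
have hH u : h u <= H by rewrite /H (bigD1 u) //= lerDl sumr_ge0.
have H0 : 0 <= H by rewrite sumr_ge0.
have deg_limit : (outdeg D v)%:R / \sum_u (outdeg D u)%:R = (1 + A)^-1 :> R.
  by rewrite -(hitting_time_kac sym hv hu) invfM mulrCA divff ?mulr1 // pnatr_eq0 -lt0n.
exists (A * (1 + H) + H) => a a0 a1; rewrite pagerankE deg_limit.
have phi_ge := potential_ge_hitting deg_gt0 hv hu h0 a0 a1.
have phi_le := potential_le_hitting deg_gt0 hv hu a0 a1 hH.
apply: pagerank_ratio_approx => //; first exact: avg_out_ge0.
- have qh : \sum_u q u * h u <= H.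
    by rewrite -[H]mul1r -q1 mulr_suml ler_sum // => u _; rewrite ler_wpM2l.
  apply: le_trans (_ : \sum_u q u * (1 - a * h u) <= _); last first.
    by apply: ler_sum => u _; rewrite ler_wpM2l.
  rewrite (eq_bigr (fun u => q u - a * (q u * h u))) => [|u _]; last by ring.
  by rewrite sumrB q1 -mulr_sumr lerB // ler_wpM2l // ltW.
- by rewrite -[X in _ <= X]q1 ler_sum // => u _; rewrite ler_piMr // potential_le1.
- by rewrite -avg_out_affine //; apply: ler_avg_out.
- by rewrite -avg_out_affine //; apply: ler_avg_out.
Qed.

Lemma potential_drop_edges_to_le (R : realFieldType) n (D D' : rel 'I_n) (a : R) v :
  0 < a -> a < 1 ->
  (forall u w, u != v -> w != v -> D' u w = D u w) -> (forall u, D' u v -> D u v) ->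
  forall u, potential D' a u v <= potential D a u v.
Proof.
move=> a0 a1 DD' D'v; have [pv pu] := potential_eq D v a0 a1.
have [pv' pu'] := potential_eq D' v a0 a1.
apply: (max_principle_le (max_principle_walk (D := D') (v := v) a0 a1)) => [|u uv].
  by rewrite pv pv'.
rewrite -pu' // subrr pu // -mulrBr mulr_ge0 ?subr_ge0 //; first lra.
apply: (avg_out_drop_max (v := v)) => [w|/D'v //|w|w].
- exact: DD'.
- exact: potential_ge0.
- by rewrite pv potential_le1.
Qed.

Lemma complete_potential_const (R : realFieldType) n (D : rel 'I_n) (a : R) v :
  0 < a -> a < 1 -> (forall x y, D x y = (x != y)) ->
  forall u w, u != v -> w != v -> potential D a u v = potential D a w v.
Proof.
move=> a0 a1 DE; set phi := potential D a ^~ v; set S := \sum_w phi w.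
have [_ pu] : _ /\ forall u, u != v -> phi u = (1 - a) * avg_out D phi u :=
  potential_eq D v a0 a1.
have sum_nbr u (f : 'I_n -> R) : \sum_(w | D u w) f w = \sum_w f w - f u.
  rewrite [in RHS](bigD1 u) //= addrC addrK; apply: eq_bigl => w.
  by rewrite DE eq_sym.
have phiE u : u != v -> phi u * (n%:R - a) = (1 - a) * S.
  move=> uv; have degE : (outdeg D u)%:R = n%:R - 1 :> R.
    by rewrite -[LHS]mul1r -sumr_out_const sum_nbr sumr_const card_ord.
  have := avg_out_mul_outdeg D phi u; rewrite sum_nbr degE => avgE.
  have -> : phi u * (n%:R - a) = phi u * (n%:R - 1) + (1 - a) * phi u by ring.
  by rewrite {1}(pu u uv) -mulrA avgE -/S; ring.
have n_a : n%:R - a != 0 :> R.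
  have n1 : (1 : R) <= n%:R by rewrite ler1n (leq_ltn_trans (leq0n v) (ltn_ord v)).
  by rewrite subr_eq0 gt_eqF //; lra.
by move=> u w uv wv; apply: (mulIf n_a); rewrite !phiE.
Qed.

Section DeleteStrategy.
Variables (n : nat) (G : rel 'I_n) (v : 'I_n) (Ev : {set 'I_n}).

Lemma strategy_graph_None_sub x y : strategy_graph G v Ev None x y -> G x y.
Proof. by rewrite /strategy_graph orbF => /andP []. Qed.

Lemma strategy_graph_None_off x y :
  x != v -> y != v -> strategy_graph G v Ev None x y = G x y.
Proof. by move=> /negbTE xv /negbTE yv; rewrite /strategy_graph xv yv orbF andbT. Qed.

End DeleteStrategy.

Lemma complete_equilibrium (R : realFieldType) n (G : rel 'I_n) (q : 'I_n -> R) :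
  undirected_graph G -> complete_graph G -> prob_distribution q ->
  alpha_insensitive_equilibrium G q.
Proof.
move=> [_ irr] comp [q0 _] a a0 a1 v Ev u [_ [hu [w Dvw]]] _.
have GE x y : G x y = (x != y).
  by case: eqVneq => [->|/comp //]; apply/negbTE.
(* In a complete graph there is no non-neighbour to link to. *)
case: u hu Dvw => [u0 [u0v]|_ Dvw]; first by rewrite GE eq_sym u0v.
set D' := strategy_graph G v Ev None in Dvw *.
have sub x y : D' x y -> G x y := @strategy_graph_None_sub n G v Ev x y.
have nbr_v x : G v x -> x != v by rewrite GE eq_sym.
have phi_le := potential_drop_edges_to_le a0 a1
  (@strategy_graph_None_off n G v Ev) (fun x => @sub x v).
set Y := potential G a w v.
have phiY x : G v x -> potential G a x v = Y.
  by move=> /nbr_v xv; apply: complete_potential_const => //; apply: nbr_v; apply: sub.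
have P_eq : avg_out G (potential G a ^~ v) v = Y.
  exact: avg_out_const_on (outdeg_gt0 (sub _ _ Dvw)) phiY.
have P'_le : avg_out D' (potential D' a ^~ v) v <= Y.
  apply: le_trans (_ : _ <= avg_out D' (potential G a ^~ v) v) _.
    exact: ler_avg_out.
  by rewrite (avg_out_const_on (c := Y) (outdeg_gt0 Dvw)) // => x /sub /phiY.
apply/negP; rewrite -leNgt !pagerankE; apply: pagerank_ratio_le => //.
- by apply: sumr_ge0 => x _; rewrite mulr_ge0 ?potential_ge0.
- by apply: ler_sum => x _; rewrite ler_wpM2l.
- by rewrite P_eq.
- by rewrite P_eq potential_le1.
Qed.

Lemma connected_outdeg_gt0 n (G : rel 'I_n) (x y : 'I_n) :
  connected_graph G -> x != y -> forall u, (0 < outdeg G u)%N.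
Proof.
move=> conn xy u; have [w uw] : exists w, u != w.
  by case: (eqVneq u x) => [->|]; [exists y | exists x].
case/connectP: (conn u w) => -[|z p] /= => [_ uw'|/andP [Guz _] _].
  by rewrite uw' eqxx in uw.
exact: outdeg_gt0 Guz.
Qed.

Lemma sum_outdeg_gt (R : realFieldType) n (G : rel 'I_n) x y :
  undirected_graph G -> (forall u, (0 < outdeg G u)%N) -> x != y -> ~~ G x y ->
  2 * ((outdeg G x)%:R : R) < \sum_u (outdeg G u)%:R.
Proof.
move=> [_ irr] deg_gt0 xy nGxy; set deg := fun u => (outdeg G u)%:R : R.
have deg_ge1 u : 1 <= deg u by rewrite ler1n.
rewrite (bigD1 x) //= (bigD1 y) 1?eq_sym //=.
have nbr_x : deg x <= \sum_(u | G x u) deg u.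
  by rewrite -[deg x]mul1r -sumr_out_const ler_sum.
have nbr_rest : \sum_(u | G x u) deg u <= \sum_(u | (u != x) && (u != y)) deg u.
  rewrite big_mkcond [X in _ <= X]big_mkcond; apply: ler_sum => u _.
  case Gxu: (G x u); last by case: ifP.
  have -> // : (u != x) && (u != y).
  by apply/andP; split; apply: contraTneq Gxu => ->; rewrite ?irr.
have := deg_ge1 y; lra.
Qed.

Section AddEdge.
Variables (n : nat) (G : rel 'I_n) (x y : 'I_n).
Hypotheses (sym : forall a b, G a b = G b a) (xy : x != y) (nGxy : ~~ G x y).

Let G' := strategy_graph G x [set w | G x w] (Some y).

Lemma strategy_graph_addE a b :
  G' a b = G a b || ((a == x) && (b == y)) || ((a == y) && (b == x)).
Proof.
rewrite /G' /strategy_graph !inE orbA; congr (_ || _ || _).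
case Gab: (G a b) => //=; apply/negP => /orP [] /andP [/eqP ax].
  by rewrite -ax Gab.
by rewrite -ax sym Gab.
Qed.

Lemma strategy_graph_add_sym a b : G' a b = G' b a.
Proof.
rewrite !strategy_graph_addE sym.
by case: (G b a); case: (a == x); case: (b == y); case: (a == y); case: (b == x).
Qed.

Lemma strategy_graph_add_connected : connected_graph G -> connected_graph G'.
Proof.
move=> conn a b; apply: connect_sub (conn a b) => c d Gcd.
by apply: connect1; rewrite strategy_graph_addE Gcd.
Qed.

Lemma outdeg_add a : outdeg G' a = (outdeg G a + (a == x) + (a == y))%N.
Proof.
rewrite /outdeg; have [->|ax] := eqVneq a x.
  have -> : [set w | G' x w] = y |: [set w | G x w].
    by apply/setP => w; rewrite !inE strategy_graph_addE eqxx (negbTE xy) orbF orbC.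
  by rewrite cardsU1 inE nGxy (negbTE xy) addn0 addn1.
have [->|ay] := eqVneq a y.
  have -> : [set w | G' y w] = x |: [set w | G y w].
    by apply/setP => w; rewrite !inE strategy_graph_addE eqxx eq_sym (negbTE xy) orbF orbC.
  by rewrite cardsU1 inE sym nGxy addn0 addn1.
rewrite !addn0; apply: eq_card => w.
by rewrite !inE strategy_graph_addE (negbTE ax) (negbTE ay) !orbF.
Qed.

Lemma sum_outdeg_add (R : realFieldType) :
  \sum_a ((outdeg G' a)%:R : R) = \sum_a (outdeg G a)%:R + 2.
Proof.
have sum_ind z : \sum_a ((a == z)%:R : R) = 1.
  by rewrite (bigD1 z) //= eqxx big1 ?addr0 // => a /negbTE ->.
under eq_bigr do rewrite outdeg_add !natrD.
by rewrite !big_split /= !sum_ind -addrA.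
Qed.

End AddEdge.

Lemma equilibrium_complete (R : realFieldType) n (G : rel 'I_n) (q : 'I_n -> R) :
  undirected_graph G -> connected_graph G -> prob_distribution q ->
  alpha_insensitive_equilibrium G q -> complete_graph G.
Proof.
move=> uG conn qP eqm x y xy; apply/negPn/negP => nGxy; have [sym _] := uG.
set G' := strategy_graph G x [set w | G x w] (Some y).
have conn' : connected_graph G' := strategy_graph_add_connected x y sym conn.
have sym' : forall a b, G' a b = G' b a := strategy_graph_add_sym x y sym.
have gain z z' : z != z' -> ~~ G z z' -> outdeg G' z = (outdeg G z).+1 ->
    exists2 d, 0 < d <= 1 &
      forall a, 0 < a -> a < d -> pagerank G a q z < pagerank G' a q z.
  move=> zz' nGzz' deg'_z.
  apply: (lt_near0_of_approx (f := fun a => pagerank G a q z)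
                             (g := fun a => pagerank G' a q z)); last first.
  - by apply: pagerank_approx_deg => //; exact: connected_outdeg_gt0 conn' xy.
  - by apply: pagerank_approx_deg => //; exact: connected_outdeg_gt0 conn xy.
  rewrite deg'_z sum_outdeg_add // -natr1; apply: ratio_lt_succ => //.
  by apply: (@sum_outdeg_gt R n G z z' uG) => //; exact: connected_outdeg_gt0 conn xy.
have deg'_x : outdeg G' x = (outdeg G x).+1.
  by rewrite (outdeg_add sym xy nGxy) eqxx (negbTE xy) addn0 addn1.
have deg'_y : outdeg G' y = (outdeg G y).+1.
  by rewrite (outdeg_add sym xy nGxy) eqxx eq_sym (negbTE xy) addn0 addn1.
have [dx /andP [dx0 dx1] gain_x] := gain x y xy nGxy deg'_x.
have yx : y != x by rewrite eq_sym.
have nGyx : ~~ G y x by rewrite sym.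
have [dy /andP [dy0 dy1] gain_y] := gain y x yx nGyx deg'_y.
have mx : Num.min dx dy <= dx by rewrite ge_min lexx.
have my : Num.min dx dy <= dy by rewrite ge_min lexx orbT.
have [a0 adx ady] : [/\ 0 < Num.min dx dy / 2, Num.min dx dy / 2 < dx &
                       Num.min dx dy / 2 < dy].
  have : 0 < Num.min dx dy by rewrite lt_min dx0 dy0.
  move=> m0; split; lra.
apply: (eqm _ a0 _ x [set w | G x w] (Some y)); first lra.
- split; first by move=> w; rewrite inE.
  split; first by rewrite eq_sym xy.
  by exists y; rewrite strategy_graph_addE // !eqxx orbT.
- exact: gain_y.
- exact: gain_x.
Qed.

Theorem theorem5p3 (R : rcfType) (n : nat) (G : rel 'I_n) (q : 'I_n -> R) :
  undirected_graph G -> connected_graph G -> prob_distribution q ->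
  (alpha_insensitive_equilibrium G q <-> complete_graph G).
Proof.
move=> uG conn qP; split; first exact: equilibrium_complete.
by move=> comp; apply: complete_equilibrium.
Qed.
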